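(* Let $G$ be a finite group and let $M,N$ be normal subgroups with $1<M\le N<G$ such that every $g\in G\setminus N$ is conjugate in $G$ to every element of $gM$. Let $Z_1=Z(G)$ and, for $i>1$, let $Z_i$ be defined by $Z_i/Z_{i-1}=Z(G/Z_{i-1})$. If $m\ge 1$ and $Z_m<M$, then $Z_{m+1}\le N$. *)

From mathcomp Require Import all_boot all_fingroup all_solvable.
Set Implicit Arguments. Unset Strict Implicit. Unset Printing Implicit Defensive.

From mathcomp Require Import all_boot all_fingroup all_solvable.
Set Implicit Arguments. Unset Strict Implicit. Unset Printing Implicit Defensive.
Local Open Scope group_scope.

(* If g lies in Z_(m+1) \ N, then every x in M satisfies g x = g^h for some
   h in G, so x = [g, h] lies in [Z_(m+1), G] <= Z_m; hence M <= Z_m,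
   contradicting Z_m < M. *)

Lemma class_mulg_commg (gT : finGroupType) (G : {set gT}) (g x : gT) :
  g * x \in g ^: G -> exists2 h, h \in G & x = [~ g, h].
Proof. by case/imsetP=> h hG gx_gh; exists h; rewrite // commgEl -gx_gh mulKg. Qed.

Lemma lcoset_sub_class_ucn (gT : finGroupType) (G : {group gT}) (M : {set gT})
    (n : nat) (g : gT) :
  g \in 'Z_n.+1(G) -> {subset g *: M <= g ^: G} -> M \subset 'Z_n(G).
Proof.
move=> gZ gM_conj; apply/subsetP=> x xM.
have [h hG ->] : exists2 h, h \in G & x = [~ g, h].
  by apply: class_mulg_commg; apply: gM_conj; rewrite mem_lcoset mulKg.
exact: subsetP (ucn_comm n G) _ (mem_commg gZ hG).
Qed.

Theorem mainTheorem10 (gT : finGroupType) (G M N : {group gT}) (m : nat) :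
  M <| G -> N <| G ->
  [1 gT] \proper M -> M \subset N -> N \proper G ->
  (forall g, g \in G :\: N -> forall x, x \in g *: M -> x \in g ^: G) ->
  (1 <= m)%N ->
  'Z_m(G) \proper M ->
  'Z_m.+1(G) \subset N.
Proof.
move=> _ _ _ _ _ conjM _ ZmM; apply/subsetP=> g gZ.
apply/negPn/negP=> gN.
have gG : g \in G := subsetP (ucn_sub m.+1 G) g gZ.
have sMZm : M \subset 'Z_m(G).
  by apply: lcoset_sub_class_ucn gZ _ => x; apply: conjM; rewrite inE gN gG.
by move/proper_subn: ZmM; rewrite sMZm.
Qed.
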